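(* Let $\Phi \in \mathbb{R}^{m \times n}$, let $S \subseteq [n]$ be such that $\Phi_S$ has full column rank, and let $\overline{S} = [n]\setminus S$. Let $X \in \mathbb{R}^{n \times K}$ ($K \geq 1$) with $\mathrm{supp}(X) = S$, and let $Y = \Phi X$. Let $S_t \subseteq S$ and let $P^{(t)} = \Phi_{S_t}\Phi_{S_t}^{+}$ be the orthogonal projector onto $\mathrm{span}(\Phi_{S_t})$ (with $P^{(t)} = 0$ if $S_t = \emptyset$). Let $R^{(t)} = (I - P^{(t)})Y = (I-P^{(t)})\Phi X$. Let $q_1,\dots,q_K \geq 0$ and $Q = \mathrm{diag}(q_1,\dots,q_K)$. Then $$\|\Phi_S^{\mathrm{T}} R^{(t)} Q\|_{\infty}\, \|\Phi_S^{+}\Phi_{\overline{S}}\|_{1} \;\geq\; \|\Phi_{\overline{S}}^{\mathrm{T}} R^{(t)} Q\|_{\infty}.$$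
   Context: For $S \subseteq [n]=\{1,\dots,n\}$, $\Phi_S$ denotes the submatrix of $\Phi$ consisting of the columns indexed by $S$. $A^{+}$ is the Moore–Penrose pseudoinverse. For a matrix $A$, $\|A\|_{\infty} = \max_i \sum_j |A_{i,j}|$ (the operator norm induced by $\ell_\infty$, i.e. maximal absolute row sum) and $\|A\|_{1} = \max_j \sum_i |A_{i,j}|$ (operator norm induced by $\ell_1$, maximal absolute column sum). For a matrix $X \in \mathbb{R}^{n\times K}$, $\mathrm{supp}(X)$ is the union of the supports of its columns, i.e. the set of row indices $i$ such that $X_{i,k}\neq 0$ for some $k$. *)

From HB Require Import structures.
From mathcomp Require Import all_boot all_order all_algebra.
From mathcomp Require Import reals.
Set Implicit Arguments. Unset Strict Implicit. Unset Printing Implicit Defensive.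
Import Order.TTheory GRing.Theory Num.Theory.
Local Open Scope ring_scope.

(* Phi_S : the submatrix of A made of the columns indexed by S
   (listed in the increasing enumeration order of S). *)
Definition colS (R : Type) (m n : nat) (S : {set 'I_n}) (A : 'M[R]_(m, n))
  : 'M[R]_(m, #|S|) :=
  colsub (@enum_val _ (pred_of_set S)) A.

(* B is the Moore-Penrose pseudoinverse of A (the four Penrose conditions,
   which characterize it uniquely). *)
Definition is_mp_pinv (R : realType) (m n : nat)
  (A : 'M[R]_(m, n)) (B : 'M[R]_(n, m)) : Prop :=
  [/\ A *m B *m A = A, B *m A *m B = B,
      (A *m B)^T = A *m B & (B *m A)^T = B *m A].

Definition mx_norm_inf (R : realType) (m n : nat) (A : 'M[R]_(m, n)) : R :=
  \big[Num.max/0]_(i < m) \sum_(j < n) `|A i j|.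

Definition mx_norm_one (R : realType) (m n : nat) (A : 'M[R]_(m, n)) : R :=
  \big[Num.max/0]_(j < n) \sum_(i < m) `|A i j|.

Definition mx_supp (R : realType) (n K : nat) (X : 'M[R]_(n, K)) : {set 'I_n} :=
  [set i | [exists k, X i k != 0]].

From HB Require Import structures.
From mathcomp Require Import all_boot all_order all_algebra.
From mathcomp Require Import reals.
Set Implicit Arguments. Unset Strict Implicit. Unset Printing Implicit Defensive.
Import Order.TTheory GRing.Theory Num.Theory.
Local Open Scope ring_scope.

(* The residual R = (I - P) Y lies in the column space of Phi_S, since both Y
   and the range of P (spanned by columns of Phi_St, St in S) do.  The
   orthogonal projector Phi_S Phi_S^+ therefore fixes R, and its symmetry gives
   Phi_Sbar^T R = (Phi_S^+ Phi_Sbar)^T (Phi_S^T R).  The bound then follows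
   from ||M^T N||_inf <= ||M||_1 ||N||_inf. *)

Section ColumnSubmatrices.
Variables (R : realType) (m n : nat).

Lemma mulmx_colS (p : nat) (Phi : 'M[R]_(m, n)) (S : {set 'I_n})
    (Z : 'M[R]_(n, p)) :
  (forall j k, j \notin S -> Z j k = 0) ->
  Phi *m Z = colS S Phi *m rowsub (@enum_val _ (pred_of_set S)) Z.
Proof.
move=> Z_out; apply/matrixP=> i k; rewrite !mxE.
rewrite (bigID (mem S)) /= [X in _ + X]big1 ?addr0; last first.
  by move=> j /Z_out ->; rewrite mulr0.
rewrite (big_enum_val (A := pred_of_set S) (fun j => Phi i j * Z j k)).
by apply: eq_bigr => l _; rewrite !mxE.
Qed.

Lemma colS_subset (Phi : 'M[R]_(m, n)) (S St : {set 'I_n}) :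
  St \subset S ->
  colS St Phi = colS S Phi *m rowsub (@enum_val _ (pred_of_set S))
    (colsub (@enum_val _ (pred_of_set St)) (1%:M : 'M[R]_n)).
Proof.
move=> sStS; rewrite /colS -[X in colsub _ X]mulmx1 -mulmx_colsub.
apply: mulmx_colS => j k jNS; rewrite !mxE.
case: eqP => // ej; case/negP: jNS.
by rewrite ej (subsetP sStS) // enum_valP.
Qed.

End ColumnSubmatrices.

Lemma mx_supp_out (R : realType) (n K : nat) (X : 'M[R]_(n, K)) j k :
  j \notin mx_supp X -> X j k = 0.
Proof.
rewrite inE; apply: contraNeq => Xjk_neq0.
by apply/existsP; exists k.
Qed.

Lemma mp_pinv_trmx_factor (R : realType) (m s c p : nat)
    (A : 'M[R]_(m, s)) (B : 'M[R]_(s, m)) (C : 'M[R]_(m, c)) (W : 'M[R]_(s, p)) :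
  is_mp_pinv A B ->
  C^T *m (A *m W) = (B *m C)^T *m (A^T *m (A *m W)).
Proof.
case=> ABA _ AB_sym _.
by rewrite trmx_mul -mulmxA (mulmxA B^T) -trmx_mul AB_sym (mulmxA (A *m B)) ABA.
Qed.

Section MatrixNorms.
Variable R : realType.

Lemma mx_norm_inf_ge0 (m n : nat) (A : 'M[R]_(m, n)) : 0 <= mx_norm_inf A.
Proof. exact: bigmax_ge_id. Qed.

Lemma mx_norm_one_ge0 (m n : nat) (A : 'M[R]_(m, n)) : 0 <= mx_norm_one A.
Proof. exact: bigmax_ge_id. Qed.

Lemma mx_norm_inf_trmx_mul (s c p : nat) (M : 'M[R]_(s, c)) (N : 'M[R]_(s, p)) :
  mx_norm_inf (M^T *m N) <= mx_norm_one M * mx_norm_inf N.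
Proof.
apply: bigmax_le => [|i _]; first by rewrite mulr_ge0 ?mx_norm_one_ge0 ?mx_norm_inf_ge0.
have row_bound : \sum_(j < p) `|(M^T *m N) i j|
    <= \sum_(l < s) `|M l i| * \sum_(j < p) `|N l j|.
  rewrite (eq_bigr (fun l => \sum_(j < p) `|M l i| * `|N l j|)); last first.
    by move=> l _; rewrite mulr_sumr.
  rewrite [X in _ <= X]exchange_big /=; apply: ler_sum => j _; rewrite !mxE.
  apply: le_trans (ler_norm_sum _ _ _) _.
  by apply: ler_sum => l _; rewrite !mxE normrM.
apply: le_trans row_bound _.
apply: (@le_trans _ _ (\sum_(l < s) `|M l i| * mx_norm_inf N)).
  by apply: ler_sum => l _; rewrite ler_wpM2l //; apply: (bigmax_sup l).
by rewrite -mulr_suml ler_wpM2r ?mx_norm_inf_ge0 //; apply: (bigmax_sup i).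
Qed.

End MatrixNorms.

Theorem lemma1 (R : realType) (m n K : nat) (Phi : 'M[R]_(m, n))
  (S St : {set 'I_n}) (X : 'M[R]_(n, K)) (q : 'I_K -> R)
  (PinvS : 'M[R]_(#|S|, m)) (PinvSt : 'M[R]_(#|St|, m)) :
  \rank (colS S Phi) = #|S| ->
  (0 < K)%N ->
  mx_supp X = S ->
  St \subset S ->
  (forall k, 0 <= q k) ->
  is_mp_pinv (colS S Phi) PinvS ->
  is_mp_pinv (colS St Phi) PinvSt ->
  let Y := Phi *m X in
  let Pt := colS St Phi *m PinvSt in
  let Rt := (1%:M - Pt) *m Y in
  let Q := diag_mx (\row_k q k) in
  mx_norm_inf ((colS S Phi)^T *m Rt *m Q)
    * mx_norm_one (PinvS *m colS (~: S) Phi)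
  >= mx_norm_inf ((colS (~: S) Phi)^T *m Rt *m Q).
Proof.
move=> _ _ suppX sStS _ pinvS _; cbv zeta.
set Y := Phi *m X; set Rt := (1%:M - _) *m Y; set Q := diag_mx _.
set A := colS S Phi; set C := colS (~: S) Phi.
have Y_range : Y = A *m rowsub (@enum_val _ (pred_of_set S)) X.
  by apply: mulmx_colS => j k; rewrite -suppX; apply: mx_supp_out.
have [W Rt_range] : exists W, Rt = A *m W.
  eexists; rewrite /Rt mulmxBl mul1mx (colS_subset Phi sStS) Y_range.
  by rewrite -!mulmxA -mulmxBr.
have factor : C^T *m Rt *m Q = (PinvS *m C)^T *m (A^T *m Rt *m Q).
  by rewrite Rt_range (mp_pinv_trmx_factor _ _ pinvS) !mulmxA.
by rewrite factor mulrC; apply: mx_norm_inf_trmx_mul.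
Qed.
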